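(* Let $\rho$ be a quantum state on a separable Hilbert space with spectrum $\{\lambda^{\rho}_i\}_{i=1}^{+\infty}$ arranged in non-increasing order. If $$\sum_{i=1}^{+\infty}\lambda^{\rho}_i \ln^2 i<+\infty,$$ then $\rho$ has the FA-property.
   Context: A state $\rho$ with spectrum $\{\lambda^{\rho}_i\}_{i=1}^{+\infty}$ (eigenvalues in non-increasing order, counting multiplicity, padded with zeros if the rank is finite) has the FA-property (finite-dimensional approximation property) if there exists a sequence $\{g_i\}_{i=1}^{+\infty}$ of nonnegative numbers such that $\sum_{i=1}^{+\infty}\lambda^{\rho}_i g_i<+\infty$ and $\lim_{\beta\to 0^+}\left[\sum_{i=1}^{+\infty}e^{-\beta g_i}\right]^{\beta}=1$. *)

From HB Require Import structures.
From mathcomp Require Import all_boot all_order all_algebra.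
From mathcomp Require Import all_classical all_reals all_analysis.
Set Implicit Arguments. Unset Strict Implicit. Unset Printing Implicit Defensive.
Import Order.TTheory GRing.Theory Num.Theory.
Import numFieldNormedType.Exports.
Local Open Scope classical_set_scope.
Local Open Scope ring_scope.
Local Open Scope ereal_scope.

(* The spectrum of a quantum state (density operator) on a separable Hilbert
   space: eigenvalues counted with multiplicity, in non-increasing order,
   padded with zeros.  Index shift: [lam i] is the paper's lambda_{i+1}. *)
Definition state_spectrum {R : realType} (lam : nat -> R) : Prop :=
  (forall i, (0 <= lam i)%R) /\
  (forall i, (lam i.+1 <= lam i)%R) /\
  \sum_(0 <= i <oo) (lam i)%:E = 1.

(* FA-property (index shift as above: g i is the paper's g_{i+1}). *)
Definition FA_property {R : realType} (lam : nat -> R) : Prop :=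
  exists g : nat -> R,
    (forall i, (0 <= g i)%R) /\
    \sum_(0 <= i <oo) (lam i * g i)%:E < +oo /\
    ((\sum_(0 <= i <oo) (expR (- (b * g i)))%:E) `^ b
       @[b --> (0:R)^'+] --> 1).

(* Put a_i = lam_i ln^2 (i+1).  Since sum a_i < oo, the positive null sequence
   r_n = (sum_(k >= n) a_k) + 1/(n+1) satisfies a_n <= r_n - r_(n+1), so the weights
   h_n = r_n^(-1/2) tend to +oo while sum a_n h_n <= 2 sqrt r_0 by telescoping.
   Take g_i = ln^2 (i+1) h_i.  If h_i >= c for i >= N, then
   exp (- b g_i) <= exp (1/(b c)) / (i+1)^2, hence
   b ln (sum_i exp (- b g_i)) <= b ln (2 (N+1)^2) + 1/c; as c is arbitrary and
   the sum is at least exp (- b g_0) = 1, its b-th power tends to 1. *)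

From mathcomp Require Import all_boot all_order all_algebra.
From mathcomp Require Import all_classical all_reals all_analysis.
From mathcomp Require Import ring lra.
Set Implicit Arguments.
Unset Strict Implicit.
Unset Printing Implicit Defensive.

Import Order.TTheory GRing.Theory Num.Theory.
Import numFieldNormedType.Exports.
Local Open Scope classical_set_scope.
Local Open Scope ring_scope.

Section Estimates.
Variable R : realType.

Lemma sum_inv_sqr_le (n : nat) :
  \sum_(0 <= i < n) ((i.+1%:R : R) ^+ 2)^-1 <= 2 - 2 / n.+1%:R.
Proof.
elim: n => [|n IHn]; first by rewrite big_geq // divr1 subrr.
rewrite big_nat_recr //= -(natr1 n.+1).
set x : R := n.+1%:R in IHn *; have x1 : 1 <= x by rewrite ler1n.
clearbody x; suff : (x ^+ 2)^-1 <= 2 / x - 2 / (x + 1) by lra.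
rewrite -subr_ge0.
have -> : 2 / x - 2 / (x + 1) - (x ^+ 2)^-1 = (x - 1) / (x ^+ 2 * (x + 1)).
  by field; rewrite !gt_eqF //; lra.
rewrite divr_ge0 ?mulr_ge0 ?sqr_ge0 //; lra.
Qed.

Lemma nneseries_le_of_sum_le (u : nat -> R) (M : R) :
  (forall i, 0 <= u i) -> (forall n, \sum_(0 <= i < n) u i <= M) ->
  (\sum_(0 <= i <oo) (u i)%:E <= M%:E)%E.
Proof.
move=> u0 uM; apply: lime_le.
  by apply: is_cvg_nneseries => i _ _; rewrite lee_fin.
by apply: nearW => n; rewrite sumEFin lee_fin.
Qed.

Lemma nneseries_le_inv_sqr (u : nat -> R) (K : R) :
  (forall i, 0 <= u i) -> (forall i, u i <= K / i.+1%:R ^+ 2) ->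
  (\sum_(0 <= i <oo) (u i)%:E <= (2 * K)%:E)%E.
Proof.
move=> u0 uK; have K0 : 0 <= K.
  by have := le_trans (u0 0%N) (uK 0%N); rewrite expr1n divr1.
apply: nneseries_le_of_sum_le => // n.
apply: le_trans (ler_sum _ (fun i _ => uK i)) _.
rewrite -mulr_sumr mulrC ler_wpM2r //.
apply: le_trans (sum_inv_sqr_le n) _.
by rewrite gerBl divr_ge0.
Qed.

Lemma sum_div_sqrt_telescope (a r : nat -> R) :
  (forall n, 0 < r n) -> (forall n, a n <= r n - r n.+1) ->
  forall n, \sum_(0 <= i < n) a i / Num.sqrt (r i)
            <= 2 * Num.sqrt (r 0%N) - 2 * Num.sqrt (r n).
Proof.
move=> r0 ar; elim=> [|n IHn]; first by rewrite big_geq // subrr.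
rewrite big_nat_recr //=.
suff : a n / Num.sqrt (r n) <= 2 * Num.sqrt (r n) - 2 * Num.sqrt (r n.+1) by lra.
set x := Num.sqrt (r n); set y := Num.sqrt (r n.+1).
have x0 : 0 < x by rewrite sqrtr_gt0.
have rxy : r n - r n.+1 = x ^+ 2 - y ^+ 2 by rewrite !sqr_sqrtr ?ltW.
have := ar n; rewrite rxy ler_pdivrMr //; clearbody x y.
have := sqr_ge0 (x - y); nra.
Qed.

Lemma nnseries_vanishing_majorant (a : nat -> R) :
  (forall n, 0 <= a n) -> (\sum_(0 <= n <oo) (a n)%:E < +oo)%E ->
  exists r : nat -> R, [/\ (forall n, 0 < r n),
    (forall n, a n <= r n - r n.+1) & r @ \oo --> 0].
Proof.
move=> a0 a_fin; have a_cvg := nnseries_is_cvg a0 a_fin.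
set A := limn (series a) in a_cvg.
have le_series_A n : series a n <= A.
  apply: nondecreasing_cvgn_le => // p q pq.
  exact: (nondecreasing_series (P := xpredT) (m := 0%N)).
exists (fun n => A - series a n + n.+1%:R^-1); split.
- move=> n; apply: ltr_wpDl; first by rewrite subr_ge0.
  by rewrite invr_gt0 ltr0n.
- move=> n /=; rewrite seriesSr.
  have : (n.+2%:R : R)^-1 <= n.+1%:R^-1 by rewrite lef_pV2 ?posrE ?ltr0n // ler_nat.
  by move: (n.+1%:R^-1) (n.+2%:R^-1) => p q; lra.
- rewrite -[0]addr0; apply: cvgD; last exact: cvg_harmonic.
  by rewrite -(subrr A); apply: cvgB => //; exact: cvg_cst.
Qed.

Lemma nnseries_weight_cvgy (a : nat -> R) :
  (forall n, 0 <= a n) -> (\sum_(0 <= n <oo) (a n)%:E < +oo)%E ->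
  exists h : nat -> R, [/\ (forall n, 0 <= h n),
    (\sum_(0 <= n <oo) (a n * h n)%:E < +oo)%E & h @ \oo --> +oo].
Proof.
move=> a0 a_fin; have [r [r0 ar r_cvg]] := nnseries_vanishing_majorant a0 a_fin.
have sqrt_r0 n : 0 < Num.sqrt (r n) by rewrite sqrtr_gt0.
exists (fun n => (Num.sqrt (r n))^-1); split.
- by move=> n; rewrite invr_ge0 ltW.
- apply: le_lt_trans (ltry (2 * Num.sqrt (r 0%N))).
  apply: nneseries_le_of_sum_le => [n|n]; first by rewrite mulr_ge0 // invr_ge0 ltW.
  apply: le_trans (sum_div_sqrt_telescope r0 ar n) _.
  by rewrite gerBl mulr_ge0 // ltW.
- apply/(cvgrVy (f := fun n => Num.sqrt (r n))); first exact: nearW.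
  rewrite -sqrtr0; exact: continuous_cvg (@sqrt_continuous R 0) r_cvg.
Qed.

Lemma expR_sqr_weight_le (b c t w : R) : 0 < b -> 0 < c -> c <= w ->
  expR (- (b * (t ^+ 2 * w))) <= expR (b * c)^-1 * expR (- (2 * t)).
Proof.
move=> b0 c0 cw; rewrite -expRD ler_expR.
have bc0 : 0 < b * c by rewrite mulr_gt0.
(* AM-GM: 2 t - b c t^2 <= (b c)^-1 *)
have : 0 <= b * c * (t - (b * c)^-1) ^+ 2 by rewrite mulr_ge0 ?sqr_ge0 ?ltW.
have -> : b * c * (t - (b * c)^-1) ^+ 2 = b * c * t ^+ 2 - 2 * t + (b * c)^-1.
  by field; rewrite !gt_eqF.
have : b * c * t ^+ 2 <= b * (t ^+ 2 * w).
  by rewrite -mulrA ler_pM2l // mulrC ler_wpM2l ?sqr_ge0.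
move: (b * c * t ^+ 2) (b * (t ^+ 2 * w)) ((b * c)^-1) => x y z; lra.
Qed.

Lemma expR_lnsqr_weight_le_inv_sqr (h : nat -> R) (b c : R) (N : nat) :
  (forall i, 0 <= h i) -> (forall i, (N <= i)%N -> c <= h i) ->
  0 < b -> 0 < c -> forall i,
  expR (- (b * (ln (i.+1%:R : R) ^+ 2 * h i)))
    <= N.+1%:R ^+ 2 * expR (b * c)^-1 / i.+1%:R ^+ 2.
Proof.
move=> h0 hN b0 c0 i; set E := expR (b * c)^-1.
have E1 : 1 <= E by rewrite -expR0 ler_expR invr_ge0 mulr_ge0 ?ltW.
have i0 : 0 < (i.+1%:R : R) ^+ 2 by rewrite exprn_gt0 ?ltr0n.
case: (leqP N i) => [Ni | iN].
- apply: le_trans (expR_sqr_weight_le _ b0 c0 (hN _ Ni)) _.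
  rewrite expRN expRM_natl lnK ?posrE ?ltr0n // -/E ler_pM2r ?invr_gt0 //.
  by apply: ler_peMl; [exact: le_trans E1 | rewrite exprn_ege1 ?ler1n].
- apply: (@le_trans _ _ 1).
    rewrite expR_le1 oppr_le0 mulr_ge0 ?(ltW b0) //.
    exact: mulr_ge0 (sqr_ge0 _) (h0 i).
  rewrite ler_pdivlMr // mul1r.
  apply: le_trans (ler_peMr (exprn_ge0 _ (ler0n _ _)) E1).
  by rewrite lerXn2r ?nnegrE ?ler0n // ler_nat ltnS ltnW.
Qed.

Lemma mul_ln_cvg0_subexp (s : R -> R) :
  (forall b, 0 < b -> 1 <= s b) ->
  (forall c, 0 < c -> exists2 K, 1 <= K &
     forall b, 0 < b -> s b <= K * expR (b * c)^-1) ->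
  b * ln (s b) @[b --> 0^'+] --> 0.
Proof.
move=> s1 sK; apply/cvgrPdist_lt => e e0.
have [K K1 sK_e] : exists2 K, 1 <= K &
    forall b, 0 < b -> s b <= K * expR (b * (2 / e))^-1.
  by apply: sK; rewrite divr_gt0.
have lnK0 : 0 <= ln K by exact: ln_ge0.
have d0 : 0 < e / 2 / (ln K + 1) by rewrite !divr_gt0 //; lra.
near=> b.
have b0 : 0 < b by near: b; exact: nbhs_right_gt.
have bd : b < e / 2 / (ln K + 1) by near: b; exact: nbhs_right_lt.
have s0 : 0 < s b by apply: lt_le_trans (s1 b b0).
have K0 : 0 < K by apply: lt_le_trans K1.
have sbK := sK_e b b0.
have lns_le : ln (s b) <= ln K + (b * (2 / e))^-1.
  rewrite -[X in _ <= _ + X]expRK -lnM ?posrE ?expR_gt0 //.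
  by rewrite ler_ln ?posrE // mulr_gt0 ?expR_gt0.
have b_lnK : b * (ln K + 1) < e / 2 by rewrite -ltr_pdivlMr //; lra.
have be : b * (b * (2 / e))^-1 = e / 2 by field; rewrite !gt_eqF.
rewrite sub0r normrN ger0_norm ?mulr_ge0 ?ln_ge0 ?(ltW b0) ?s1 //.
have : b * ln (s b) <= b * (ln K + (b * (2 / e))^-1) by rewrite ler_pM2l.
rewrite mulrDr be; lra.
Unshelve. all: by end_near. Qed.

Lemma poweR_cvg1_subexp (F : R -> \bar R) :
  (forall b, 0 < b -> (1 <= F b)%E) ->
  (forall c, 0 < c -> exists2 K, 1 <= K &
     forall b, 0 < b -> (F b <= (K * expR (b * c)^-1)%:E)%E) ->
  (F b `^ b @[b --> 0^'+] --> 1)%E.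
Proof.
move=> F1 FK.
have F_fin b : 0 < b -> F b \is a fin_num.
  move=> b0; have [K _ FK1] := FK 1 ltr01.
  rewrite ge0_fin_numE ?(le_trans _ (F1 b b0)) //.
  exact: le_lt_trans (FK1 b b0) (ltry _).
have Fb1 b : 0 < b -> 1 <= fine (F b) by move=> b0; rewrite -lee_fin fineK ?F1 ?F_fin.
have lnF_cvg : b * ln (fine (F b)) @[b --> 0^'+] --> 0.
  apply: mul_ln_cvg0_subexp Fb1 _ => c c0.
  have [K K1 FK_c] := FK c c0; exists K => // b b0.
  by rewrite -lee_fin fineK ?FK_c ?F_fin.
apply: cvg_trans (_ : (expR (b * ln (fine (F b))))%:E @[b --> 0^'+] --> 1%E).
  apply: near_eq_cvg; near=> b.
  have b0 : 0 < b by near: b; exact: nbhs_right_gt.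
  rewrite /= -[in RHS](fineK (F_fin b b0)) poweR_EFin /powR gt_eqF //.
  exact: lt_le_trans ltr01 (Fb1 b b0).
apply: cvg_EFin; first exact: nearW.
rewrite -expR0; exact: (continuous_cvg _ (@continuous_expR R 0) lnF_cvg).
Unshelve. all: by end_near. Qed.

End Estimates.

Local Open Scope ereal_scope.

Theorem proposition2 (R : realType) (lam : nat -> R) :
  state_spectrum lam ->
  \sum_(0 <= i <oo) (lam i * (ln (i.+1%:R)) ^+ 2)%:E < +oo ->
  FA_property lam.
Proof.
move=> [lam0 _] lam_ln2_fin.
have lnsqr0 i : (0 <= ln (i.+1%:R : R) ^+ 2)%R by rewrite sqr_ge0.
have [h [h0 lam_ln2_h_fin h_cvgy]] :=
  nnseries_weight_cvgy (fun i => mulr_ge0 (lam0 i) (lnsqr0 i)) lam_ln2_fin.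
exists (fun i => ln (i.+1%:R : R) ^+ 2 * h i)%R.
split; first by move=> i; rewrite mulr_ge0.
split; first by under eq_eseriesr do rewrite mulrA.
apply: poweR_cvg1_subexp => [b b0|c c0].
  have := @nneseries_lim_ge R (fun i => (expR (- (b * (ln i.+1%:R ^+ 2 * h i))))%:E)
    xpredT 0 1 (fun i _ _ => expR_ge0 _).
  by rewrite big_nat1 ln1 expr0n /= mul0r mulr0 oppr0 expR0.
have [N _ hN] := cvgry_ge h_cvgy c.
exists (2 * N.+1%:R ^+ 2)%R => [|b b0].
  have : (1 <= N.+1%:R ^+ 2 :> R)%R by rewrite exprn_ege1 ?ler1n.
  lra.
rewrite -mulrA; apply: nneseries_le_inv_sqr => [i|]; first exact: expR_ge0.
exact: expR_lnsqr_weight_le_inv_sqr h0 hN b0 c0.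
Qed.
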